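(* Let $X_1,\dots,X_n$ be variables with ranges $D_1,\dots,D_n$ and let $A_1,\dots,A_m$ be events (sets of full assignments), $A_i$ depending only on the variables indexed by $\mathrm{vbl}(A_i)\subseteq[n]$. Let $G$ be the dependency graph on $[m]$ (distinct $i,j$ adjacent iff $\mathrm{vbl}(A_i)\cap\mathrm{vbl}(A_j)\neq\emptyset$). For an assignment $\sigma$, let $\mathrm{Res}(\sigma)$ be the output of the resampling-set selection procedure described in the context. Then for every $i\in\partial\,\mathrm{Res}(\sigma)$ we have $A_i\cap\sigma_{\mathrm{Res}(\sigma)}=\emptyset$.
   Context: Notation: $\mathrm{Bad}(\sigma)=\{i:\sigma\in A_i\}$; for $S\subseteq[m]$, $\partial S=\{i\notin S:\ i\text{ adjacent in }G\text{ to some }j\in S\}$ and $\mathrm{vbl}(S)=\bigcup_{i\in S}\mathrm{vbl}(A_i)$; $\sigma_S$ is the restriction of $\sigma$ to $\mathrm{vbl}(S)$. We write $A_i\cap\sigma_S=\emptyset$ if either $\mathrm{vbl}(A_i)\cap\mathrm{vbl}(S)=\emptyset$, or no assignment that agrees with $\sigma$ on $\mathrm{vbl}(A_i)\cap\mathrm{vbl}(S)$ belongs to $A_i$; otherwise $A_i\cap\sigma_S\ne\emptyset$. Selection procedure: start with $R=\mathrm{Bad}(\sigma)$ and $N=\emptyset$; while $\partial R\setminus N\neq\emptyset$, for each $i\in\partial R\setminus N$ (with $R$ the current set), add $i$ to $R$ if $A_i\cap\sigma_R\neq\emptyset$ and add $i$ to $N$ otherwise; when $\partial R\setminus N=\emptyset$,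 output $\mathrm{Res}(\sigma):=R$. *)

From mathcomp Require Import all_boot.
From Stdlib Require Import ClassicalEpsilon.

Set Implicit Arguments.
Unset Strict Implicit.
Unset Printing Implicit Defensive.

Definition asb (P : Prop) : bool :=
  if excluded_middle_informative P then true else false.

Section LLL.
Variables (n m : nat) (D : 'I_n -> Type).
Definition assignment := forall v : 'I_n, D v.
Variable A : 'I_m -> assignment -> Prop.
Variable vbl : 'I_m -> {set 'I_n}.

Definition agree_on (X : {set 'I_n}) (s t : assignment) : Prop :=
  forall v, v \in X -> s v = t v.
Definition depends_only : Prop :=
  forall i s t, agree_on (vbl i) s t -> (A i s <-> A i t).

Definition adj (i j : 'I_m) : bool :=
  (i != j) && ~~ [disjoint vbl i & vbl j].

Definition bdry (S : {set 'I_m}) : {set 'I_m} :=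
  [set i | (i \notin S) && [exists j in S, adj i j]].

Definition vblS (S : {set 'I_m}) : {set 'I_n} := \bigcup_(j in S) vbl j.

Definition cap_empty (i : 'I_m) (s : assignment) (S : {set 'I_m}) : Prop :=
  [disjoint vbl i & vblS S] \/
  ~ (exists t : assignment, agree_on (vbl i :&: vblS S) s t /\ A i t).

Definition Bad (s : assignment) : {set 'I_m} := [set i | asb (A i s)].

(* One round of the while loop: B := ∂R \ N (computed at the start of the
   round); each i ∈ B is processed in increasing index order, the test using
   the current R. *)
Definition round (s : assignment) (RN : {set 'I_m} * {set 'I_m})
    : {set 'I_m} * {set 'I_m} :=
  let B := bdry RN.1 :\: RN.2 in
  foldl (fun (rn : {set 'I_m} * {set 'I_m}) (i : 'I_m) =>
           if i \in B then
             (if asb (~ cap_empty i s rn.1) then (i |: rn.1, rn.2)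
              else (rn.1, i |: rn.2))
           else rn) RN (enum 'I_m).

Definition step (s : assignment) (RN : {set 'I_m} * {set 'I_m}) :=
  if bdry RN.1 :\: RN.2 == set0 then RN else round s RN.

(* Each non-terminal round adds at least one new index to R ∪ N (R, N
   disjoint subsets of [m]), so the loop stops after at most m rounds;
   m.+1 iterations of [step] therefore reach the output. *)
Definition Res (s : assignment) : {set 'I_m} :=
  (iter m.+1 (step s) (Bad s, set0)).1.

End LLL.

(* Along the procedure, every index put into N is rejected for good: when it
   is tested it lies in the boundary of the current R, so its variables meet
   vbl(R), and the test fails only because no assignment agreeing with sigma
   on vbl(A_i) ∩ vbl(R) lies in A_i.  Since R only grows, agreeing on the
   larger intersection later is even more demanding, so this rejection
   persists.  Each non-final round puts a new index into R ∪ N, hence the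
   loop stops within m rounds with ∂R ⊆ N, and every boundary index is
   rejected. *)

From mathcomp Require Import all_boot.
From Stdlib Require Import ClassicalEpsilon.

Set Implicit Arguments.
Unset Strict Implicit.
Unset Printing Implicit Defensive.

Lemma asbP (P : Prop) : reflect P (asb P).
Proof. by rewrite /asb; case: excluded_middle_informative => p; constructor. Qed.

Section Selection.
Variables (n m : nat) (D : 'I_n -> Type) (A : 'I_m -> assignment D -> Prop)
  (vbl : 'I_m -> {set 'I_n}) (s : assignment D).

Implicit Types (R : {set 'I_m}) (RN rn : {set 'I_m} * {set 'I_m}) (i : 'I_m).

Definition excluded R i : Prop :=
  ~ exists t, agree_on (vbl i :&: vblS vbl R) s t /\ A i t.

Definition rejections_excluded RN : Prop :=
  forall i, i \in RN.2 -> excluded RN.1 i.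

Definition covered RN : {set 'I_m} := RN.1 :|: RN.2.

Definition pending RN : {set 'I_m} := bdry vbl RN.1 :\: RN.2.

Definition round_body RN rn (i : 'I_m) : {set 'I_m} * {set 'I_m} :=
  if i \in pending RN then
    (if asb (~ cap_empty A vbl i s rn.1) then (i |: rn.1, rn.2)
     else (rn.1, i |: rn.2))
  else rn.

Lemma roundE RN : round A vbl s RN = foldl (round_body RN) RN (enum 'I_m).
Proof. by []. Qed.

Lemma stepE RN :
  step A vbl s RN = if pending RN == set0 then RN else round A vbl s RN.
Proof. by []. Qed.

Lemma vblS_subset R R' : R \subset R' -> vblS vbl R \subset vblS vbl R'.
Proof.
by move=> sRR'; apply/bigcupsP => j jR; apply: bigcup_sup; apply: subsetP jR.
Qed.

Lemma excluded_subset R R' i : R \subset R' -> excluded R i -> excluded R' i.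
Proof.
move=> sRR' exR [t [agt Ait]]; apply: exR; exists t; split=> // v vi.
by apply: agt; apply: subsetP vi; apply: setIS; apply: vblS_subset.
Qed.

Lemma rejections_excluded_subset R R' N :
  R \subset R' -> rejections_excluded (R, N) -> rejections_excluded (R', N).
Proof. by move=> sRR' rej i iN; apply: excluded_subset sRR' (rej i iN). Qed.

Lemma bdry_meets_vblS R R' i :
  i \in bdry vbl R -> R \subset R' -> ~~ [disjoint vbl i & vblS vbl R'].
Proof.
rewrite inE => /andP[_ /existsP[j /andP[jR /andP[_ meet]]]] sRR'.
apply: contra meet; apply: disjointWr.
exact: subset_trans (bigcup_sup _ jR) (vblS_subset sRR').
Qed.

Lemma cap_empty_excluded R i :
  ~~ [disjoint vbl i & vblS vbl R] -> cap_empty A vbl i s R -> excluded R i.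
Proof. by move=> /negP meet [|]. Qed.

Lemma round_body_covers RN rn i :
  covered rn \subset covered (round_body RN rn i) /\
  (i \in pending RN -> i \in covered (round_body RN rn i)).
Proof.
rewrite /round_body; case: ifP => // _.
by case: ifP => _; split; rewrite ?setUSS ?subsetUr // !inE eqxx ?orbT.
Qed.

Lemma round_body_excluded RN rn i : RN.1 \subset rn.1 ->
  rejections_excluded rn -> rejections_excluded (round_body RN rn i).
Proof.
case: rn => R N /= sR rej; rewrite /round_body.
case: ifP => // iP; case: asbP => [_ | not_not_empty].
  exact: rejections_excluded_subset (subsetUr _ _) rej.
move=> j /setU1P[-> | jN]; last exact: rej.
have meet : ~~ [disjoint vbl i & vblS vbl R].
  by apply: bdry_meets_vblS sR; case/setDP: iP.
exact: cap_empty_excluded meet (NNPP _ not_not_empty).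
Qed.

Lemma round_body_R_subset RN rn i : rn.1 \subset (round_body RN rn i).1.
Proof. by rewrite /round_body; do 2?case: ifP => _ //=; apply: subsetUr. Qed.

Lemma foldl_round_body RN (l : seq 'I_m) rn :
  RN.1 \subset rn.1 -> rejections_excluded rn ->
  let r := foldl (round_body RN) rn l in
  [/\ rejections_excluded r, covered rn \subset covered r &
      {in l, forall i, i \in pending RN -> i \in covered r}].
Proof.
elim: l rn => [|i l IHl] rn sR rej /=; first by split.
have sR' := subset_trans sR (round_body_R_subset RN rn i).
have [cov icov] := round_body_covers RN rn i.
have [rej' cov' lcov] := IHl _ sR' (round_body_excluded (i := i) sR rej).
split=> //; first exact: subset_trans cov cov'.
move=> j /predU1P[-> | jl] jP; last exact: lcov.
exact: subsetP cov' _ (icov jP).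
Qed.

Lemma round_grows RN : rejections_excluded RN -> pending RN != set0 ->
  rejections_excluded (round A vbl s RN) /\
  #|covered RN| < #|covered (round A vbl s RN)|.
Proof.
move=> rej /set0Pn[i iP]; rewrite roundE.
have [rej' cov lcov] := foldl_round_body (enum 'I_m) (subxx RN.1) rej.
split=> //; apply/proper_card/properP; split=> //; exists i.
  by apply: lcov; rewrite ?mem_enum.
by move: iP; rewrite !inE negb_or => /andP[-> /andP[-> _]].
Qed.

Lemma iter_step_progress k :
  let RN := iter k (step A vbl s) (Bad A s, set0) in
  rejections_excluded RN /\ (pending RN = set0 \/ k <= #|covered RN|).
Proof.
elim: k => [|k IHk] /=; first by split=> [i|]; [rewrite inE | right].
move: IHk; set RN := iter k _ _ => -[rej [halted | le_k]].
  by rewrite stepE halted eqxx; split=> //; left.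
rewrite stepE; case: eqP => [-> | /eqP ne]; first by split=> //; left.
have [rej' gt] := round_grows rej ne.
by split=> //; right; apply: leq_ltn_trans gt.
Qed.

End Selection.

Theorem lemma23 (n m : nat) (D : 'I_n -> Type)
  (A : 'I_m -> assignment D -> Prop) (vbl : 'I_m -> {set 'I_n})
  (hdep : depends_only A vbl) (sigma : assignment D) :
  forall i : 'I_m, i \in bdry vbl (Res A vbl sigma) ->
    cap_empty A vbl i sigma (Res A vbl sigma).
Proof.
move=> i; rewrite /Res; have [rej term] := iter_step_progress A vbl sigma m.+1.
set RN := iter _ _ _ in rej term *.
have halted : pending vbl RN = set0.
  case: term => // /leq_trans/(_ (max_card _)).
  by rewrite card_ord ltnn.
move=> iR; right; apply: rej.
by apply: contraT => iN; rewrite -(in_set0 i) -halted inE iN.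
Qed.
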